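(* Let $F:\mathcal{G}_{\Sigma,\Delta,\pi}\to\mathcal{G}_{\Sigma,\Delta,\pi}$ be a causal graph dynamics that is monotonic for the subgraph order and admits a monotonic local rule. Let $\widetilde{F}:\mathbf{G}_{\Sigma,\Delta,\pi}\to\mathbf{G}_{\Sigma,\Delta,\pi}$ be a functor with $\mathrm{U}\circ F=\widetilde{F}\circ\mathrm{U}$. Then for every morphism $m:G\to H$ of $\mathbf{G}_{\Sigma,\Delta,\pi}$, the renamings $|\widetilde{F}(m)|$ and $|\widetilde{F}(\varnothing_{|m|})|$ are equal.
   Context: Fix an uncountably infinite set $\mathcal{V}$, sets $\Sigma,\Delta$, finite $\pi$. Graphs: countable $V(G)\subset\mathcal{V}$, a set $E(G)$ of pairwise disjoint two-element subsets of $V(G)\times\pi$, partial labelings $\sigma(G),\delta(G)$; $\mathcal{G}_{\Sigma,\Delta,\pi}$ the set of graphs, ordered by componentwise inclusion $\subseteq$. Renamings are bijections $R$ of $\mathcal{V}$ acting naturally on graphs ($V(R(G))=R(V(G))$, edges $\{u\!:\!i,v\!:\!j\}\mapsto\{R(u)\!:\!i,R(v)\!:\!j\}$, $\sigma(R(G))=\sigma(G)\circ R^{-1}$, $\delta(R(G))=\delta(G)\circ R^{-1}$). Disks $G^r_c$ (radius $r$, center $c$): vertices at distance $\le r+1$, edges with an endpoint at distance $\le r$, vertex labels only at distance $\le r$, edge labels of the kept edges. A local rule of radius $r$ is $f$ from radius-$r$ disks to graphs with: renaming covariance ($f\circ R=R'\circ f$ for some $R'$), disjointness preservation, bounded output size,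 and consistency of $f(G^r_u),f(G^r_v)$; a CGD is $F(G)=\bigcup_{v\in V(G)} f(G^r_v)$; monotonic means w.r.t. $\subseteq$ (subdisk order on disks: same center and inclusion). The category $\mathbf{G}_{\Sigma,\Delta,\pi}$: objects graphs; a morphism $m:G\to H$ is a renaming $|m|$ with $|m|(G)\subseteq H$; composition by composition of renamings. $\mathrm{U}:(\mathcal{G}_{\Sigma,\Delta,\pi},\subseteq)\to\mathbf{G}_{\Sigma,\Delta,\pi}$ is the identity on objects and sends $G\subseteq H$ to the morphism $G\to H$ with identity renaming; $\mathrm{U}\circ F$ is the functor sending $G\subseteq H$ to $\mathrm{U}(F(G)\subseteq F(H))$. For a renaming $R$, $\varnothing_R:\varnothing\to\varnothing$ is the endomorphism of the empty graph with $|\varnothing_R|=R$. *)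

From HB Require Import structures.
From mathcomp Require Import all_boot.
From mathcomp Require Import boolp classical_sets cardinality.

Set Implicit Arguments.
Unset Strict Implicit.
Unset Printing Implicit Defensive.

Local Open Scope classical_set_scope.

Section CGD.
Variables (V Sigma Delta : Type) (pi : finType).

Definition port := (V * pi)%type.
Definition edge := set port.

(* Raw graph data: vertex set, edge set, and the two partial labelings
   given by their graphs (functional relations). *)
Record graph := Graph {
  gV : set V;
  gE : set edge;
  gs : set (V * Sigma);
  gd : set (edge * Delta) }.

(* Well-formedness: the conditions making raw data an element of
   G_{Sigma,Delta,pi}. *)
Definition wf (G : graph) : Prop :=
  countable (gV G) /\
  (forall e, gE G e -> exists u i v j,
       (u, i) <> (v, j) /\ e = [set (u, i)] `|` [set (v, j)] /\ gV G u /\ gV G v) /\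
  (forall e e', gE G e -> gE G e' -> e <> e' -> e `&` e' = set0) /\
  (forall v a, gs G (v, a) -> gV G v) /\
  (forall v a b, gs G (v, a) -> gs G (v, b) -> a = b) /\
  (forall e d, gd G (e, d) -> gE G e) /\
  (forall e d d', gd G (e, d) -> gd G (e, d') -> d = d').

Definition gsub (G H : graph) : Prop :=
  gV G `<=` gV H /\ gE G `<=` gE H /\ gs G `<=` gs H /\ gd G `<=` gd H.

Definition gempty : graph := Graph set0 set0 set0 set0.

Definition gunion (G H : graph) : graph :=
  Graph (gV G `|` gV H) (gE G `|` gE H) (gs G `|` gs H) (gd G `|` gd H).

Definition gbigcup (A : set V) (f : V -> graph) : graph :=
  Graph (\bigcup_(v in A) gV (f v)) (\bigcup_(v in A) gE (f v))
        (\bigcup_(v in A) gs (f v)) (\bigcup_(v in A) gd (f v)).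

Definition renaming (R : V -> V) : Prop := bijective R.

Definition rnport (R : V -> V) (p : port) : port := (R p.1, p.2).

Definition rename (R : V -> V) (G : graph) : graph :=
  Graph (R @` gV G)
        ((fun e => rnport R @` e) @` gE G)
        ((fun x => (R x.1, x.2)) @` gs G)
        ((fun x => (rnport R @` x.1, x.2)) @` gd G).

Definition adj (G : graph) (u v : V) : Prop :=
  exists i j, gE G ([set (u, i)] `|` [set (v, j)]).

Fixpoint dle (G : graph) (n : nat) (c v : V) : Prop :=
  match n with
  | 0 => v = c
  | n'.+1 => dle G n' c v \/ exists w, dle G n' c w /\ adj G w v
  end.

Definition disk (r : nat) (G : graph) (c : V) : graph :=
  let E := [set e | gE G e /\ exists p, e p /\ dle G r c p.1] in
  Graph [set v | gV G v /\ dle G r.+1 c v]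
        E
        [set x | gs G x /\ dle G r c x.1]
        [set x | gd G x /\ E x.1].

Definition isdisk (r : nat) (D : graph) (c : V) : Prop :=
  exists G, wf G /\ gV G c /\ D = disk r G c.

Definition local_rule (r : nat) (f : graph -> V -> graph) : Prop :=
  (forall D c, isdisk r D c -> wf (f D c)) /\
  (forall R, renaming R -> exists R', renaming R' /\
      forall D c, isdisk r D c -> f (rename R D) (R c) = rename R' (f D c)) /\
  (forall D c D' c', isdisk r D c -> isdisk r D' c' ->
      gV D `&` gV D' = set0 -> gV (f D c) `&` gV (f D' c') = set0) /\
  (exists b : nat, forall D c, isdisk r D c ->
      exists g : 'I_b -> V, gV (f D c) `<=` range g) /\
  (forall G u v, wf G -> gV G u -> gV G v ->
      wf (gunion (f (disk r G u) u) (f (disk r G v) v))).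

Definition monotonic_rule (r : nat) (f : graph -> V -> graph) : Prop :=
  forall D D' c, isdisk r D c -> isdisk r D' c -> gsub D D' -> gsub (f D c) (f D' c).

Definition induced_by (F : graph -> graph) (r : nat) (f : graph -> V -> graph) : Prop :=
  forall G, wf G -> F G = gbigcup (gV G) (fun v => f (disk r G v) v).

Definition graph_map (F : graph -> graph) : Prop := forall G, wf G -> wf (F G).

Definition monotonic (F : graph -> graph) : Prop :=
  forall G H, wf G -> wf H -> gsub G H -> gsub (F G) (F H).

Record hom (G H : graph) := Hom {
  hren :> V -> V;
  hren_bij : renaming hren;
  hren_sub : gsub (rename hren G) H }.

Lemma emptyhom_sub (R : V -> V) : gsub (rename R gempty) gempty.
Proof.
rewrite /gsub /=.
have E : forall (A B : Type) (h : A -> B), h @` set0 = set0 by move=> *; exact: image_set0.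
rewrite !E; by split; [|split; [|split]].
Qed.

Definition emptyhom (R : V -> V) (HR : renaming R) : hom gempty gempty :=
  Hom HR (emptyhom_sub R).

(* A functor Ft on G_{Sigma,Delta,pi} whose object part is F (as forced by
   U o F = Ft o U).  Morphisms with the same endpoints and the same renaming
   are equal, so the functor laws are stated on renamings. *)
Definition functor_over (F : graph -> graph)
    (Fm : forall G H, hom G H -> hom (F G) (F H)) : Prop :=
  (forall G (m : hom G G), wf G -> hren m = id -> hren (Fm G G m) = id) /\
  (forall G H K (m1 : hom G H) (m2 : hom H K) (m3 : hom G K),
      wf G -> wf H -> wf K ->
      hren m3 = hren m2 \o hren m1 ->
      hren (Fm G K m3) = hren (Fm H K m2) \o hren (Fm G H m1)).

(* U o F = Ft o U on morphisms: the inclusion G <= H (the morphism with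
   identity renaming) is sent to the inclusion F(G) <= F(H). *)
Definition commutes_with_U (F : graph -> graph)
    (Fm : forall G H, hom G H -> hom (F G) (F H)) : Prop :=
  forall G H (m : hom G H), wf G -> wf H -> hren m = id -> hren (Fm G H m) = id.

End CGD.

From mathcomp Require Import all_boot.
From mathcomp Require Import boolp classical_sets cardinality.

(* Both the inclusion [∅ ⊆ G] followed by [m] and [∅_|m|] followed by the
   inclusion [∅ ⊆ H] are morphisms [∅ -> H] with renaming [|m|].  Since
   [U ∘ F = F~ ∘ U], the functor sends both inclusions to identity renamings,
   so functoriality forces [|F~ m| = |F~ ∅_|m||]. *)

Set Implicit Arguments.
Unset Strict Implicit.
Unset Printing Implicit Defensive.

Local Open Scope classical_set_scope.

Section EmptyGraphMorphisms.
Variables (V Sigma Delta : Type) (pi : finType).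
Local Notation graph := (graph V Sigma Delta pi).
Local Notation gempty := (gempty V Sigma Delta pi).

Lemma wf_gempty : wf gempty.
Proof.
split; first exact: countable0.
by split; [|split; [|split; [|split; [|split]]]].
Qed.

Lemma gsub_rename_gempty (R : V -> V) (H : graph) : gsub (rename R gempty) H.
Proof. by rewrite /gsub /= !image_set0; split; [|split; [|split]]; apply: sub0set. Qed.

Lemma renaming_id : renaming (@id V).
Proof. by exists id. Qed.

Definition hom_from_gempty (H : graph) (R : V -> V) (HR : renaming R) :
  hom gempty H := Hom HR (gsub_rename_gempty R H).

Definition incl_from_gempty (H : graph) : hom gempty H :=
  hom_from_gempty H renaming_id.

Variables (F : graph -> graph) (Fm : forall G H : graph, hom G H -> hom (F G) (F H)).
Hypotheses (Fm_functor : functor_over Fm) (Fm_U : commutes_with_U Fm).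

Lemma Fm_incl_from_gempty (H : graph) : wf H -> hren (Fm (incl_from_gempty H)) = id.
Proof. by move=> wH; apply: Fm_U => //; exact: wf_gempty. Qed.

Lemma Fm_hom_from_gempty (G H : graph) (m : hom G H) : wf G -> wf H ->
  hren (Fm m) = hren (Fm (hom_from_gempty H (hren_bij m))).
Proof.
move=> wG wH.
have := Fm_functor.2 _ _ _ (incl_from_gempty G) m (hom_from_gempty H (hren_bij m))
  wf_gempty wG wH erefl.
by rewrite Fm_incl_from_gempty.
Qed.

Lemma Fm_hom_from_gempty_emptyhom (H : graph) (R : V -> V) (HR : renaming R) :
  wf H ->
  hren (Fm (hom_from_gempty H HR)) = hren (Fm (@emptyhom V Sigma Delta pi R HR)).
Proof.
move=> wH.
have := Fm_functor.2 _ _ _ (@emptyhom V Sigma Delta pi R HR) (incl_from_gempty H)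
  (hom_from_gempty H HR) wf_gempty wf_gempty wH erefl.
by rewrite Fm_incl_from_gempty.
Qed.

End EmptyGraphMorphisms.

Theorem proposition4p9 (V Sigma Delta : Type) (pi : finType)
    (V_uncountable : ~ countable [set: V])
    (F : graph V Sigma Delta pi -> graph V Sigma Delta pi)
    (Fm : forall G H : graph V Sigma Delta pi, hom G H -> hom (F G) (F H)) :
  graph_map F ->
  monotonic F ->
  (exists (r : nat) (f : graph V Sigma Delta pi -> V -> graph V Sigma Delta pi),
      local_rule r f /\ monotonic_rule r f /\ induced_by F r f) ->
  functor_over Fm ->
  commutes_with_U Fm ->
  forall (G H : graph V Sigma Delta pi) (m : hom G H), wf G -> wf H ->
    hren (Fm G H m) = hren (Fm (gempty V Sigma Delta pi) (gempty V Sigma Delta pi)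
                 (@emptyhom V Sigma Delta pi (hren m) (hren_bij m))).
Proof.
move=> _ _ _ Fm_functor Fm_U G H m wG wH.
rewrite (Fm_hom_from_gempty Fm_functor Fm_U m wG wH).
exact: Fm_hom_from_gempty_emptyhom.
Qed.
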